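(* Let $\kappa$ be an uncountable regular cardinal and $\mu>1$ a cardinal. Let $A$ be the set of all $x\in{}^\kappa\mu$ such that $x(\alpha)=0$ for only finitely many $\alpha<\kappa$. Then $A$ is a closed subset of ${}^\kappa\mu$ that is not a retract of ${}^\kappa\mu$ (i.e. there is no continuous $f:{}^\kappa\mu\to A$ with $f\restriction A=\mathrm{id}_A$).
   Context: ${}^\kappa\mu$ carries the topology whose basic open sets are $N_s=\{x\in{}^\kappa\mu : s\subseteq x\}$ for $s$ a function from some ordinal $\alpha<\kappa$ to $\mu$. *)

From Stdlib Require Import List.

(* kappa is represented by a type K with a strict order lt that is a
   well-order, whose order type is an uncountable regular cardinal. *)
Record regular_uncountable_cardinal (K : Type) (lt : K -> K -> Prop) : Prop := {
  rc_irrefl : forall a, ~ lt a a;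
  rc_trans : forall a b c, lt a b -> lt b c -> lt a c;
  rc_total : forall a b, lt a b \/ a = b \/ lt b a;
  rc_wf : well_founded lt;
  (* initial ordinal (cardinal): no injection of K into a proper initial segment *)
  rc_initial : forall a, ~ exists g : K -> K,
      (forall b, lt (g b) a) /\ (forall b c, g b = g c -> b = c);
  rc_regular : forall S : K -> Prop, (forall a, exists b, S b /\ ~ lt b a) ->
      exists g : K -> K, (forall b, S (g b)) /\ (forall b c, g b = g c -> b = c);
  rc_uncountable : ~ exists g : K -> nat, forall b c, g b = g c -> b = c
}.

(* Topology on K -> M (i.e. ^kappa mu): basic open sets
   N_s = {x | s subset x}, s : alpha -> mu, alpha < kappa. *)
Definition is_open {K M : Type} (lt : K -> K -> Prop) (U : (K -> M) -> Prop) : Prop :=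
  forall x, U x -> exists a : K,
    forall y : K -> M, (forall b, lt b a -> y b = x b) -> U y.

Definition is_closed {K M : Type} (lt : K -> K -> Prop) (C : (K -> M) -> Prop) : Prop :=
  is_open lt (fun x => ~ C x).

Definition continuous_map {K M : Type} (lt : K -> K -> Prop)
  (f : (K -> M) -> (K -> M)) : Prop :=
  forall U, is_open lt U -> is_open lt (fun x => U (f x)).

Definition finitely_many_zeros {K M : Type} (z : M) (x : K -> M) : Prop :=
  exists l : list K, forall a, x a = z -> In a l.

(* Below a regular uncountable kappa every countable set of ordinals is
   bounded, and since basic open sets only constrain an initial segment,
   infinitely many zeros are witnessed below some alpha < kappa: this makes
   the set A of points with finitely many zeros closed.  A continuous
   retraction f onto A cannot exist: starting from a point of A with zeros
   at alpha_0 < ... < alpha_(n-1), continuity of f at that fixed point yields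
   a level above which changing the point does not destroy these zeros of
   f; choosing alpha_n beyond it, the point y with zeros exactly at all the
   alpha_n agrees with the n-th approximation below alpha_n for every n, so
   f y vanishes at every alpha_n and f y is not in A. *)

From Stdlib Require Import List.
From Stdlib Require Import Classical ClassicalEpsilon Arith Lia FinFun.

Lemma injective_seq_not_in_list {A : Type} (s : nat -> A) (l : list A) :
  Injective s -> ~ (forall n, In (s n) l).
Proof.
  intros s_inj s_in.
  assert (nodup : NoDup (map s (seq 0 (S (length l))))).
  { apply Injective_map_NoDup; [exact s_inj | apply seq_NoDup]. }
  assert (incl_l : incl (map s (seq 0 (S (length l)))) l).
  { intros a Ha. apply in_map_iff in Ha. destruct Ha as [n [<- _]]. apply s_in. }
  pose proof (NoDup_incl_length nodup incl_l) as len_le.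
  rewrite length_map, length_seq in len_le. lia.
Qed.

Section IteratedChoice.

Variables (A : Type) (next : list A -> A).

Fixpoint iter_prefix (n : nat) : list A :=
  match n with
  | 0 => nil
  | S n => next (iter_prefix n) :: iter_prefix n
  end.

Definition iter_seq (n : nat) : A := next (iter_prefix n).

Lemma In_iter_prefix n b :
  In b (iter_prefix n) <-> exists m, m < n /\ b = iter_seq m.
Proof.
  induction n as [|n IH]; simpl.
  - split; [intros [] | intros [m [Hm _]]; lia].
  - split.
    + intros [<- | Hb].
      * exists n. split; [lia | reflexivity].
      * apply IH in Hb. destruct Hb as [m [Hm ->]]. exists m. split; [lia | reflexivity].
    + intros [m [Hm ->]]. destruct (Nat.eq_dec m n) as [-> | Hne]; [now left |].
      right. apply IH. exists m. split; [lia | reflexivity].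
Qed.

Lemma iter_seq_rel (R : A -> A -> Prop) :
  (forall l b, In b l -> R b (next l)) ->
  forall m n, m < n -> R (iter_seq m) (iter_seq n).
Proof.
  intros next_R m n Hmn. apply next_R, In_iter_prefix. now exists m.
Qed.

Lemma iter_seq_injective :
  (forall l, ~ In (next l) l) -> Injective iter_seq.
Proof.
  intros next_fresh.
  assert (neq : forall m n, m < n -> iter_seq m <> iter_seq n).
  { apply (iter_seq_rel (fun b c => b <> c)). intros l b Hb ->. exact (next_fresh l Hb). }
  intros m n Heq. destruct (Nat.lt_trichotomy m n) as [Hmn | [Hmn | Hmn]]; auto.
  - now destruct (neq m n Hmn).
  - now destruct (neq n m Hmn).
Qed.

End IteratedChoice.

Arguments iter_prefix {A} next n.
Arguments iter_seq {A} next n.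

Section FinitelyManyZeros.

Variables (K M : Type) (z : M).

Lemma not_finitely_many_zeros_seq (x : K -> M) :
  ~ finitely_many_zeros z x ->
  exists s : nat -> K, Injective s /\ forall n, x (s n) = z.
Proof.
  intros infinite.
  assert (fresh : forall l, exists a, x a = z /\ ~ In a l).
  { intros l. apply NNPP. intros none. apply infinite. exists l. intros a Ha.
    apply NNPP. intros Hnot. apply none. now exists a. }
  destruct (choice _ fresh) as [next Hnext].
  exists (iter_seq next). split.
  - apply iter_seq_injective. intros l. apply Hnext.
  - intros n. apply Hnext.
Qed.

Lemma seq_zeros_not_finitely_many (x : K -> M) (s : nat -> K) :
  Injective s -> (forall n, x (s n) = z) -> ~ finitely_many_zeros z x.
Proof.
  intros s_inj s_zero [l Hl].
  apply (injective_seq_not_in_list s l s_inj). intros n. apply Hl, s_zero.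
Qed.

Variables (w : M) (w_neq_z : w <> z).

Definition zeros_on (P : K -> Prop) (b : K) : M :=
  if excluded_middle_informative (P b) then z else w.

Lemma zeros_on_eq_z (P : K -> Prop) b : zeros_on P b = z <-> P b.
Proof.
  unfold zeros_on. destruct (excluded_middle_informative (P b)); split; tauto.
Qed.

Lemma zeros_on_ext (P Q : K -> Prop) b : (P b <-> Q b) -> zeros_on P b = zeros_on Q b.
Proof.
  intros PQ. unfold zeros_on.
  destruct (excluded_middle_informative (P b)), (excluded_middle_informative (Q b));
    tauto.
Qed.

Lemma finitely_many_zeros_on_list (l : list K) :
  finitely_many_zeros z (zeros_on (fun b => In b l)).
Proof. exists l. intros a. apply zeros_on_eq_z. Qed.

End FinitelyManyZeros.

Arguments not_finitely_many_zeros_seq {K M z x}.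
Arguments seq_zeros_not_finitely_many {K M z x s}.
Arguments zeros_on {K M} z w P b.
Arguments zeros_on_eq_z {K M z w} w_neq_z P b.
Arguments zeros_on_ext {K M z w} P Q b.
Arguments finitely_many_zeros_on_list {K M z w} w_neq_z l.

Section RegularUncountable.

Variables (K : Type) (lt : K -> K -> Prop).
Hypothesis kappa : regular_uncountable_cardinal K lt.

Lemma regular_uncountable_inhabited : inhabited K.
Proof.
  apply NNPP. intros empty. apply (rc_uncountable _ _ kappa).
  exists (fun _ => 0). intros b. destruct empty. now constructor.
Qed.

Lemma countable_bounded (s : nat -> K) : exists a, forall n, lt (s n) a.
Proof.
  apply NNPP. intros unbounded.
  assert (cofinal : forall a, exists b, (exists n, b = s n) /\ ~ lt b a).
  { intros a. apply NNPP. intros none. apply unbounded. exists a. intros n.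
    apply NNPP. intros Hn. apply none. exists (s n). split; [now exists n | exact Hn]. }
  destruct (rc_regular _ _ kappa _ cofinal) as [g [g_range g_inj]].
  destruct (choice _ g_range) as [index Hindex].
  apply (rc_uncountable _ _ kappa). exists index. intros b c Hbc.
  apply g_inj. now rewrite Hindex, Hbc, <- Hindex.
Qed.

Lemma list_bounded (l : list K) (a : K) :
  exists c, lt a c /\ forall b, In b l -> lt b c.
Proof.
  destruct (countable_bounded (fun n => nth n (a :: l) a)) as [c Hc].
  exists c. split.
  - exact (Hc 0).
  - intros b Hb. destruct (In_nth (a :: l) b a (or_intror Hb)) as [n [_ <-]]. apply Hc.
Qed.

Lemma is_open_agree_on_list {M : Type} (l : list K) (x : K -> M) :
  is_open lt (fun y => forall b, In b l -> y b = x b).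
Proof.
  intros u Hu. destruct regular_uncountable_inhabited as [k].
  destruct (list_bounded l k) as [c [_ Hc]].
  exists c. intros y Hy b Hb. rewrite Hy by (apply Hc; exact Hb). now apply Hu.
Qed.

Lemma is_closed_finitely_many_zeros (M : Type) (z : M) :
  is_closed lt (finitely_many_zeros z).
Proof.
  intros x infinite.
  destruct (not_finitely_many_zeros_seq infinite) as [s [s_inj s_zero]].
  destruct (countable_bounded s) as [a Ha].
  exists a. intros y Hy. apply (seq_zeros_not_finitely_many s_inj).
  intros n. rewrite Hy; [apply s_zero | apply Ha].
Qed.

Section NoRetraction.

Variables (M : Type) (z w : M) (f : (K -> M) -> (K -> M)).
Hypotheses (w_neq_z : w <> z) (f_cont : continuous_map lt f)
  (f_retract : forall x, finitely_many_zeros z x -> f x = x).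

Lemma retraction_keeps_zeros_near (l : list K) :
  exists c, (forall b, In b l -> lt b c) /\
    forall y, (forall b, lt b c -> y b = zeros_on z w (fun b => In b l) b) ->
      forall b, In b l -> f y b = z.
Proof.
  set (x := zeros_on z w (fun b => In b l)).
  destruct (f_cont _ (is_open_agree_on_list l (fun _ => z)) x) as [a Ha].
  { intros b Hb. rewrite f_retract by exact (finitely_many_zeros_on_list w_neq_z l).
    now apply (zeros_on_eq_z w_neq_z). }
  destruct (list_bounded l a) as [c [Hac Hc]].
  exists c. split; [exact Hc |].
  intros y Hy. apply Ha. intros b Hb. apply Hy. exact (rc_trans _ _ kappa _ _ _ Hb Hac).
Qed.

Lemma retraction_has_infinitely_many_zeros :
  exists y, ~ finitely_many_zeros z (f y).
Proof.
  destruct (choice _ retraction_keeps_zeros_near) as [next Hnext].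
  set (alpha := iter_seq next).
  assert (alpha_incr : forall m n, m < n -> lt (alpha m) (alpha n)).
  { apply iter_seq_rel. intros l b Hb. now apply Hnext. }
  assert (alpha_inj : Injective alpha).
  { apply iter_seq_injective. intros l Hl.
    exact (rc_irrefl _ _ kappa _ (proj1 (Hnext l) _ Hl)). }
  set (y := zeros_on z w (fun b => exists m, b = alpha m)).
  (* Below [alpha n] only the first [n] terms of the increasing [alpha] occur. *)
  assert (y_approx : forall n b, lt b (alpha n) ->
            y b = zeros_on z w (fun b => In b (iter_prefix next n)) b).
  { intros n b Hb. apply zeros_on_ext. rewrite In_iter_prefix.
    split; [intros [m ->] | intros [m [_ ->]]; now exists m].
    exists m. split; [| reflexivity].
    destruct (Nat.lt_ge_cases m n) as [Hmn | Hnm]; [exact Hmn | exfalso].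
    destruct (Nat.eq_dec n m) as [<- | Hne].
    - exact (rc_irrefl _ _ kappa _ Hb).
    - apply (rc_irrefl _ _ kappa (alpha m)).
      apply (rc_trans _ _ kappa _ _ _ Hb), alpha_incr. lia. }
  exists y. apply (seq_zeros_not_finitely_many alpha_inj). intros n.
  apply (proj2 (Hnext (iter_prefix next (S n))) y).
  - apply y_approx.
  - now left.
Qed.

End NoRetraction.

End RegularUncountable.

Arguments is_closed_finitely_many_zeros {K lt} kappa {M} z.
Arguments retraction_has_infinitely_many_zeros {K lt} kappa {M z w f}.

Theorem proposition1p4 (K M : Type) (lt : K -> K -> Prop) (z : M) :
  regular_uncountable_cardinal K lt ->
  (exists w : M, w <> z) ->
  is_closed lt (finitely_many_zeros z) /\
  ~ (exists f : (K -> M) -> (K -> M),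
        continuous_map lt f /\
        (forall x, finitely_many_zeros z (f x)) /\
        (forall x, finitely_many_zeros z x -> f x = x)).
Proof.
  intros kappa [w w_neq_z]. split.
  - exact (is_closed_finitely_many_zeros kappa z).
  - intros [f [f_cont [f_into f_retract]]].
    destruct (retraction_has_infinitely_many_zeros kappa w_neq_z f_cont f_retract)
      as [y Hy].
    exact (Hy (f_into y)).
Qed.
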